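(* The formal power series $L$ and $R$ satisfy $L(z,x)=x^{-1}\bigl(L(z,x)-xL_1(z)\bigr)+R(z,x)$ and $R(z,x)=z\,R(z,x)\,L(z,x)+x$, where $L_1(z)$ is the coefficient of $x^1$ in $L(z,x)$.
   Context: Formulas are built from atoms by a binary product: every formula is an atom or $A\bullet B$. A context is a finite (possibly empty) list of formulas; commas denote concatenation; its length is its number of formulas. Size: $|p|=0$, $|A\bullet B|=1+|A|+|B|$. Frontier: $\mathrm{fr}(p)=p$, $\mathrm{fr}(A\bullet B)=\mathrm{fr}(A),\mathrm{fr}(B)$. A context is irreducible if its leftmost formula is not a product (it is empty or begins with an atom). A focused derivation is a finite derivation tree with no undischarged premises using only: ($\bullet L$) from $A,B,\Delta\vdash C$ infer $A\bullet B,\Delta\vdash C$; ($\bullet R^{foc}$) from $\Gamma\vdash A$ and $\Delta\vdash B$ infer $\Gamma,\Delta\vdash A\bullet B$ with $\Gamma$ irreducible; ($id^{atm}$) $p\vdash p$ for atoms $p$. For each $n$ fix the frontier $p_0,\dots,p_n$ of distinct atoms. Let $\ell_{n,k}$ (resp. $r_{n,k}$) be the number of focused derivations of sequents $\Gamma\vdash B$ with $|B|=n$, $\mathrm{fr}(B)=p_0,\dots,p_n$, and $\Gamma$ a context (resp. an irreducible context) of length $k$. $L(z,x)=\sum_{n,k}\ell_{n,k}z^nx^k$ and $R(z,x)=\sum_{n,k}r_{n,k}z^nx^k$. *)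

From mathcomp Require Import all_boot all_algebra.
Set Implicit Arguments. Unset Strict Implicit. Unset Printing Implicit Defensive.
Import GRing.Theory.
Local Open Scope ring_scope.

Inductive fml : Type :=
| At : nat -> fml
| Prod : fml -> fml -> fml.

Fixpoint fsize (A : fml) : nat :=
  match A with At _ => 0 | Prod A B => (fsize A + fsize B).+1 end.

Fixpoint fr (A : fml) : seq nat :=
  match A with At p => [:: p] | Prod A B => fr A ++ fr B end.

Definition irreducible (G : seq fml) : bool :=
  match G with [::] => true | At _ :: _ => true | Prod _ _ :: _ => false end.

(* Focused derivations of  G |- C  (proof-relevant: inhabitants are derivation trees). *)
Inductive deriv : seq fml -> fml -> Type :=
| d_id (p : nat) : deriv [:: At p] (At p)
| d_L (A B : fml) (D : seq fml) (C : fml) :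
    deriv (A :: B :: D) C -> deriv (Prod A B :: D) C
| d_R (G D : seq fml) (A B : fml) :
    irreducible G -> deriv G A -> deriv D B -> deriv (G ++ D) (Prod A B).

(* Sequents counted by l_{n,k}: |B| = n, fr(B) = p_0..p_n with p_i := At i,
   context of length k (and irreducible for r_{n,k}). *)
Definition good_seq (n k : nat) (G : seq fml) (B : fml) : bool :=
  [&& size G == k, fsize B == n & fr B == iota 0 n.+1].

Definition Lder (n k : nat) : Type :=
  { G : seq fml & { B : fml & (deriv G B * (good_seq n k G B = true))%type } }.

Definition Rder (n k : nat) : Type :=
  { G : seq fml & { B : fml &
      (deriv G B * ((good_seq n k G B && irreducible G) = true))%type } }.

Definition HasCard (T : Type) (m : nat) : Prop :=
  exists f : 'I_m -> T, bijective f.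

(* Bivariate formal power series in z, x with integer coefficients:
   F n k is the coefficient of z^n x^k. *)
Definition ser := nat -> nat -> int.
Definition gf (c : nat -> nat -> nat) : ser := fun n k => (c n k)%:Z.
Definition sadd (F G : ser) : ser := fun n k => F n k + G n k.
Definition ssub (F G : ser) : ser := fun n k => F n k - G n k.
Definition smul (F G : ser) : ser := fun n k =>
  \sum_(a < n.+1) \sum_(c < k.+1) F a c * G (n - a)%N (k - c)%N.
Definition sx : ser := fun n k => ((n == 0%N) && (k == 1%N))%:R.
Definition sz : ser := fun n k => ((n == 1%N) && (k == 0%N))%:R.
Definition coef_x1 (F : ser) : ser := fun n k => if k == 0%N then F n 1%N else 0.

(* Both identities are coefficientwise recurrences, proved by bijections on derivations.
   A derivation whose context starts with a product must end with the left rule, and removing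
   it lengthens the context by one; hence l(n,k) = r(n,k) + l(n,k+1) for k > 0, while
   l(n,0) = r(n,0) = 0 since contexts of derivable sequents are nonempty.  A derivation with an
   irreducible context and a product goal must end with the right rule; its premises are
   counted by r(a,c) and, after renaming the atoms of the right premise down by a+1, by
   l(n-a,k-c), whence r(n+1,k) = sum r(a,c) l(n-a,k-c).  Finally r(0,k) = [k = 1], the only
   derivation being p_0 |- p_0. *)

From Stdlib Require Import IndefiniteDescription FunctionalExtensionality.
From mathcomp Require Import all_boot all_algebra.
Set Implicit Arguments. Unset Strict Implicit. Unset Printing Implicit Defensive.

Lemma HasCard_bij (T U : Type) (f : T -> U) m :
  bijective f -> HasCard T m -> HasCard U m.
Proof. by move=> bij_f [g bij_g]; exists (f \o g); apply: bij_comp. Qed.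

Lemma HasCard_unique (T : Type) m1 m2 : HasCard T m1 -> HasCard T m2 -> m1 = m2.
Proof.
move=> [f1 bij_f1] [f2 [g2 f2K g2K]]; rewrite -[m1]card_ord -[m2]card_ord.
by apply: (@bij_eq_card _ _ (g2 \o f1)); apply: bij_comp => //; exists f2.
Qed.

Lemma HasCard_fin (F : finType) : HasCard F #|F|.
Proof. by exists enum_val; exists enum_rank; [apply: enum_valK | apply: enum_rankK]. Qed.

Lemma HasCard0 (T : Type) m : HasCard T m -> (T -> False) -> m = 0.
Proof. by case: m => // m [f _] /(_ (f ord0)). Qed.

Lemma HasCard1 (T : Type) m (t : T) : HasCard T m -> (forall x, x = t) -> m = 1.
Proof.
move=> card_T t_only; apply: HasCard_unique card_T _.
apply: (@HasCard_bij unit T (fun _ => t)); last by rewrite -card_unit; apply: HasCard_fin.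
by exists (fun _ => tt) => [[]|x] //; rewrite t_only.
Qed.

(* Choosing a bijection for every fibre needs choice. *)
Lemma HasCard_sigma (I : finType) (T_ : I -> Type) (m : I -> nat) :
  (forall i, HasCard (T_ i) (m i)) -> HasCard {i : I & T_ i} (\sum_(i : I) m i).
Proof.
move=> card_T.
have bij i : {f : 'I_(m i) -> T_ i & {g | cancel f g /\ cancel g f}}.
  have [f bij_f] := constructive_indefinite_description _ (card_T i).
  exists f; apply: constructive_indefinite_description.
  by case: bij_f => g fK gK; exists g.
have -> : \sum_(i : I) m i = #|{: {i : I & 'I_(m i)}}|.
  by rewrite card_tagged sumnE big_map big_enum; apply: eq_bigr => i _; rewrite card_ord.
apply: (@HasCard_bij _ _ (fun y => Tagged T_ (projT1 (bij (tag y)) (tagged y))))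
  (HasCard_fin _).
exists (fun y => Tagged (fun i => 'I_(m i)) (sval (projT2 (bij (tag y))) (tagged y)))
  => [[i j] | [i x]] /=; case: (bij i) => f [g [fK gK]] /=; by rewrite ?fK ?gK.
Qed.

Lemma HasCard_bij_in (T U : Type) (P : pred T) (Q : pred U) (f : T -> U) (g : U -> T) m :
  (forall x, P x -> Q (f x)) -> (forall y, Q y -> P (g y)) ->
  (forall x, P x -> g (f x) = x) -> (forall y, Q y -> f (g y) = y) ->
  HasCard {x | P x} m -> HasCard {y | Q y} m.
Proof.
move=> fQ gP fK gK.
apply: (@HasCard_bij _ _ (fun x => exist Q (f (val x)) (fQ _ (valP x)))).
exists (fun y => exist P (g (val y)) (gP _ (valP y))) => [x|y]; apply: val_inj.
  exact: fK (valP x).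
exact: gK (valP y).
Qed.

Lemma HasCard_eq_pred (T : Type) (P Q : pred T) m :
  P =1 Q -> HasCard {x | P x} m -> HasCard {x | Q x} m.
Proof. by move=> eqPQ; apply: (@HasCard_bij_in _ _ _ _ id id) => x; rewrite ?eqPQ. Qed.

Lemma HasCard_prod (T U : Type) (P : pred T) (Q : pred U) m1 m2 :
  HasCard {x | P x} m1 -> HasCard {y | Q y} m2 ->
  HasCard {z : T * U | P z.1 && Q z.2} (m1 * m2).
Proof.
move=> [f [f' fK f'K]] [g [g' gK g'K]]; rewrite -[m1]card_ord -[m2]card_ord -card_prod.
apply: (@HasCard_bij _ _ (fun ij => exist (fun z : T * U => P z.1 && Q z.2)
  (val (f ij.1), val (g ij.2)) (andb_true_intro (conj (valP (f ij.1)) (valP (g ij.2))))))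
  (HasCard_fin _).
exists (fun z => (f' (exist P (val z).1 (proj1 (andb_prop _ _ (valP z)))),
                  g' (exist Q (val z).2 (proj2 (andb_prop _ _ (valP z)))))).
  by case=> i j /=; congr pair; [rewrite -[RHS]fK | rewrite -[RHS]gK]; congr (_ _);
     apply: val_inj.
by case=> [[x y] Pxy]; apply: val_inj; rewrite /= f'K g'K.
Qed.

Lemma HasCard_fibres (T : Type) (I : finType) (P : pred T) (f : T -> I) (m : I -> nat) :
  (forall i, HasCard {x | P x && (f x == i)} (m i)) -> HasCard {x | P x} (\sum_(i : I) m i).
Proof.
move=> card_fibre.
apply: (@HasCard_bij {i : I & {x | P x && (f x == i)}} _
  (fun y => exist P (val (tagged y)) (proj1 (andb_prop _ _ (valP (tagged y))))))
  (HasCard_sigma card_fibre).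
exists (fun x => Tagged (fun i => {y | P y && (f y == i)}) (exist _ (val x)
  (andb_true_intro (conj (valP x) (eqxx (f (val x))))))) => [[i [x Px]]|x] /=.
  by case/andP: (Px) => _ /eqP fx; subst i; congr existT; apply: val_inj.
exact: val_inj.
Qed.

Lemma size_fr A : size (fr A) = (fsize A).+1.
Proof. by elim: A => //= A IHA B IHB; rewrite size_cat IHA IHB addSn addnS. Qed.

Lemma fr_Prod_iota s A B :
  (fr (Prod A B) == iota s (fsize (Prod A B)).+1) =
  (fr A == iota s (fsize A).+1) && (fr B == iota (s + (fsize A).+1) (fsize B).+1).
Proof.
by rewrite [fr _]/= [fsize _]/= -addnS -addSn iotaD eqseq_cat // size_fr size_iota.
Qed.

Lemma map_subn_iota s m : map (subn^~ s) (iota s m) = iota 0 m.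
Proof.
have -> : iota s m = map (addn s) (iota 0 m) by rewrite -iotaDl addn0.
rewrite -map_comp.
by apply: map_id_in => x _; apply: addKn.
Qed.

Lemma irreducible_cat G D : 0 < size G -> irreducible (G ++ D) = irreducible G.
Proof. by case: G. Qed.

Fixpoint rename_fml (f : nat -> nat) (A : fml) : fml :=
  match A with
  | At p => At (f p)
  | Prod A B => Prod (rename_fml f A) (rename_fml f B)
  end.

Lemma fsize_rename f A : fsize (rename_fml f A) = fsize A.
Proof. by elim: A => //= A -> B ->. Qed.

Lemma fr_rename f A : fr (rename_fml f A) = map f (fr A).
Proof. by elim: A => //= A -> B ->; rewrite map_cat. Qed.

Lemma irreducible_rename f G : irreducible (map (rename_fml f) G) = irreducible G.
Proof. by case: G => [|[]]. Qed.

Definition derivation := {G : seq fml & {B : fml & deriv G B}}.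
Definition pack G B (d : deriv G B) : derivation := existT _ G (existT _ B d).
Definition ctx (t : derivation) : seq fml := projT1 t.
Definition goal (t : derivation) : fml := projT1 (projT2 t).
Definition drv (t : derivation) : deriv (ctx t) (goal t) := projT2 (projT2 t).

Lemma deriv_size_ctx G B : deriv G B -> 0 < size G.
Proof. by elim=> // G1 D A B' _ _ G1_gt0 _ _; rewrite size_cat (leq_trans G1_gt0) ?leq_addr. Qed.

(* When the rule does not apply, [applyL] and [applyR] return their first argument. *)
Definition applyL (t : derivation) : derivation :=
  let: existT G (existT C d) := t in
  match G as G0 return deriv G0 C -> derivation with
  | A :: B :: D => fun d => pack (d_L d)
  | _ => fun _ => t
  end d.

Definition applyR (t1 t2 : derivation) : derivation :=
  let: existT G (existT A d1) := t1 in
  let: existT D (existT B d2) := t2 in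
  match G as G0 return deriv G0 A -> derivation with
  | At p :: G' => fun d1 => pack (@d_R (At p :: G') D A B erefl d1 d2)
  | _ => fun _ => t1
  end d1.

Definition premiseL (t : derivation) : derivation :=
  match drv t with d_L _ _ _ _ d => pack d | _ => t end.

Definition premisesR (t : derivation) : derivation * derivation :=
  match drv t with d_R _ _ _ _ _ dA dB => (pack dA, pack dB) | _ => (t, t) end.

Lemma ctx_applyL t A B D : ctx t = A :: B :: D ->
  ctx (applyL t) = Prod A B :: D /\ goal (applyL t) = goal t.
Proof. by case: t => G [C d] /= eG; subst G. Qed.

Lemma premiseL_applyL t : 1 < size (ctx t) -> premiseL (applyL t) = t.
Proof. by case: t => [[|A [|B D]] [C d]]. Qed.

Lemma premiseL_spec t : ~~ irreducible (ctx t) ->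
  [/\ applyL (premiseL t) = t, size (ctx (premiseL t)) = (size (ctx t)).+1
    & goal (premiseL t) = goal t].
Proof.
case: t => G [C d]; rewrite /premiseL /=.
case: d => [p | A B D C' d | G1 D A B ir dA dB] //= red; exfalso.
by case: G1 ir dA red => [|[] //] _ /deriv_size_ctx.
Qed.

Lemma ctx_applyR t1 t2 : irreducible (ctx t1) -> 0 < size (ctx t1) ->
  ctx (applyR t1 t2) = ctx t1 ++ ctx t2 /\ goal (applyR t1 t2) = Prod (goal t1) (goal t2).
Proof. by case: t1 => [[|[p|A0 B0] G'] [A d1]]; case: t2 => D [B d2]. Qed.

Lemma premisesR_applyR t1 t2 : irreducible (ctx t1) -> 0 < size (ctx t1) ->
  premisesR (applyR t1 t2) = (t1, t2).
Proof. by case: t1 => [[|[p|A0 B0] G'] [A d1]]; case: t2 => D [B d2]. Qed.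

Lemma premisesR_spec t : irreducible (ctx t) -> 0 < fsize (goal t) ->
  [/\ applyR (premisesR t).1 (premisesR t).2 = t, irreducible (ctx (premisesR t).1)
    & 0 < size (ctx (premisesR t).1)].
Proof.
case: t => G [C d]; rewrite /premisesR /=.
case: d => [p | A B D C' d | G1 D A B ir dA dB] //= _ _.
have G1_gt0 := deriv_size_ctx dA.
case: G1 ir dA G1_gt0 => [|[p|//] G'] // ir dA _.
by rewrite (bool_irrelevance ir erefl).
Qed.

(* Renaming through [applyL] and [applyR] avoids transporting derivations along [map_cat]. *)
Fixpoint rename_deriv (f : nat -> nat) G B (d : deriv G B) : derivation :=
  match d with
  | d_id p => pack (d_id (f p))
  | d_L _ _ _ _ d => applyL (rename_deriv f d)
  | d_R _ _ _ _ _ dA dB => applyR (rename_deriv f dA) (rename_deriv f dB)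
  end.

Definition rename f (t : derivation) : derivation := rename_deriv f (drv t).

Lemma rename_deriv_spec f G B (d : deriv G B) :
  ctx (rename_deriv f d) = map (rename_fml f) G /\ goal (rename_deriv f d) = rename_fml f B.
Proof.
elim: d => [p | A B' D C d [eG eC] | G1 D A B' ir dA [eG1 eA] dB [eD eB]] //=.
  by have [-> ->] := ctx_applyL eG.
have irrA : irreducible (ctx (rename_deriv f dA)) by rewrite eG1 irreducible_rename.
have szA : 0 < size (ctx (rename_deriv f dA)) by rewrite eG1 size_map; apply: deriv_size_ctx dA.
have [-> ->] := ctx_applyR (rename_deriv f dB) irrA szA.
by rewrite eG1 eD eA eB map_cat.
Qed.

Lemma rename_spec f t :
  ctx (rename f t) = map (rename_fml f) (ctx t) /\ goal (rename f t) = rename_fml f (goal t).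
Proof. exact: rename_deriv_spec. Qed.

Lemma rename_applyL g t : 1 < size (ctx t) -> rename g (applyL t) = applyL (rename g t).
Proof. by case: t => [[|A [|B D]] [C d]]. Qed.

Lemma rename_applyR g t1 t2 : irreducible (ctx t1) -> 0 < size (ctx t1) ->
  rename g (applyR t1 t2) = applyR (rename g t1) (rename g t2).
Proof. by case: t1 => [[|[p|A0 B0] G'] [A d1]]; case: t2 => D [B d2]. Qed.

Lemma rename_derivK f g G B (d : deriv G B) :
  {in fr B, cancel f g} -> rename g (rename_deriv f d) = pack d.
Proof.
elim: d => [p | A B' D C d IHd | G1 D A B' ir dA IHA dB IHB] /= fK.
- by rewrite /rename /= fK ?mem_head.
- have [eG _] := rename_deriv_spec f d.
  by rewrite rename_applyL ?eG // IHd.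
have fKA : {in fr A, cancel f g} by move=> p Ap; apply: fK; rewrite mem_cat Ap.
have fKB : {in fr B', cancel f g} by move=> p Bp; apply: fK; rewrite mem_cat Bp orbT.
have [eG1 _] := rename_deriv_spec f dA.
have G1_gt0 := deriv_size_ctx dA.
rewrite rename_applyR ?eG1 ?irreducible_rename ?size_map // (IHA fKA) (IHB fKB).
case: G1 ir dA G1_gt0 {IHA eG1} => [|[p|//] G'] // ir dA _.
by rewrite (bool_irrelevance ir erefl).
Qed.

Lemma renameK f g t : {in fr (goal t), cancel f g} -> rename g (rename f t) = t.
Proof. by case: t => G [B d]; apply: rename_derivK. Qed.

Definition countedL n k (t : derivation) : bool := good_seq n k (ctx t) (goal t).
Definition countedR n k (t : derivation) : bool := countedL n k t && irreducible (ctx t).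

Lemma HasCard_counted (P : seq fml -> fml -> bool) m :
  HasCard {G : seq fml & {B : fml & (deriv G B * (P G B = true))%type}} m ->
  HasCard {t : derivation | P (ctx t) (goal t)} m.
Proof.
apply: (HasCard_bij (f := fun x : {G & {B & (deriv G B * (P G B = true))%type}} =>
  let: existT G (existT B (d, PGB)) := x in exist (fun t => P (ctx t) (goal t)) (pack d) PGB)).
exists (fun t => existT _ (ctx (sval t)) (existT _ (goal (sval t)) (drv (sval t), proj2_sig t))).
  by case=> G [B [d PGB]].
by case=> [[G [B d]] PGB].
Qed.

Lemma countedL_ctx0 n t : countedL n 0 t = false.
Proof. by rewrite /countedL /good_seq -[size _ == 0]negbK -lt0n (deriv_size_ctx (drv t)). Qed.

Lemma countedR_fsize0 k t : countedR 0 k t -> k = 1 /\ t = pack (d_id 0).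
Proof.
case: t => G [B d]; rewrite /countedR /countedL /good_seq /=.
case: d => [p | A B' D C d | G1 D A B' ir dA dB] /=; rewrite ?andbF ?andbT //.
by case/andP=> /eqP <- /eqP [->].
Qed.

Lemma countedL_premiseL n k t :
  countedL n k t && (irreducible (ctx t) == false) -> countedL n k.+1 (premiseL t).
Proof.
case/andP=> countedL_t /eqP/negbT/premiseL_spec[_ size_ctx goal_t].
by rewrite /countedL /good_seq size_ctx goal_t eqSS.
Qed.

Lemma countedL_applyL n k t : 0 < k -> countedL n k.+1 t ->
  countedL n k (applyL t) && (irreducible (ctx (applyL t)) == false).
Proof.
move=> k_gt0; case ctx_t: (ctx t) => [|A [|B D]]; rewrite /countedL ctx_t //=.
  by case: k k_gt0.
have [-> ->] := ctx_applyL ctx_t.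
by rewrite /good_seq /= eqSS andbT.
Qed.

Lemma HasCard_countedL_split n k m1 m2 : 0 < k ->
  HasCard {t | countedR n k t} m1 -> HasCard {t | countedL n k.+1 t} m2 ->
  HasCard {t | countedL n k t} (m1 + m2).
Proof.
move=> k_gt0 cardR cardL.
have := @HasCard_fibres _ _ (countedL n k) (fun t => irreducible (ctx t))
  (fun b : bool => if b then m1 else m2).
rewrite big_bool; apply=> -[].
  by apply: HasCard_eq_pred cardR => t; rewrite eqb_id.
apply: (HasCard_bij_in (f := applyL) (g := premiseL)) cardL => t.
- exact: countedL_applyL.
- exact: countedL_premiseL.
- by case/and3P=> /eqP size_ctx _ _; apply: premiseL_applyL; rewrite size_ctx ltnS.
- by case/andP=> _ /eqP/negbT/premiseL_spec[].
Qed.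

(* The right premise of a final [d_R] has frontier p_(a+1), ..., p_(n+1), where a is the size
   of the left goal; [splitR] renames it back to p_0, ..., p_(n-a). *)
Definition splitR (t : derivation) : derivation * derivation :=
  let: (t1, t2) := premisesR t in (t1, rename (subn^~ (fsize (goal t1)).+1) t2).

Definition joinR (z : derivation * derivation) : derivation :=
  applyR z.1 (rename (addn (fsize (goal z.1)).+1) z.2).

Lemma splitR_joinR z : irreducible (ctx z.1) -> 0 < size (ctx z.1) -> splitR (joinR z) = z.
Proof.
case: z => t1 t2 /= irr_t1 size_t1.
by rewrite /splitR premisesR_applyR //= renameK // => p _; apply: addKn.
Qed.

Lemma countedR_joinR n k a c t1 t2 : a <= n -> c <= k ->
  countedR a c t1 -> countedL (n - a) (k - c) t2 -> countedR n.+1 k (joinR (t1, t2)).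
Proof.
move=> le_an le_ck /andP[/and3P[/eqP size1 /eqP fsize1 /eqP fr1] irr1].
move=> /and3P[/eqP size2 /eqP fsize2 /eqP fr2].
have size1_gt0 := deriv_size_ctx (drv t1).
rewrite /joinR /= /countedR /countedL /good_seq.
have [-> ->] := ctx_applyR (rename (addn (fsize (goal t1)).+1) t2) irr1 size1_gt0.
have [-> ->] := rename_spec (addn (fsize (goal t1)).+1) t2.
have fsize_prod : fsize (Prod (goal t1) (rename_fml (addn (fsize (goal t1)).+1) (goal t2))) = n.+1.
  by rewrite /= fsize_rename fsize1 fsize2 subnKC.
rewrite irreducible_cat // irr1 andbT fsize_prod eqxx.
rewrite size_cat size_map size1 size2 subnKC // eqxx.
rewrite -fsize_prod fr_Prod_iota fr1 fr_rename fr2 fsize_rename fsize1 fsize2 eqxx.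
by rewrite add0n -iotaDl addn0 eqxx.
Qed.

Lemma countedR_splitR n k t : countedR n.+1 k t ->
  let: (t1, t2) := splitR t in
  [/\ joinR (t1, t2) = t, fsize (goal t1) <= n, size (ctx t1) <= k,
      countedR (fsize (goal t1)) (size (ctx t1)) t1
    & countedL (n - fsize (goal t1)) (k - size (ctx t1)) t2].
Proof.
move=> /andP[/and3P[/eqP size_t /eqP fsize_t /eqP fr_t] irr_t].
have := premisesR_spec irr_t; rewrite fsize_t => /(_ isT).
rewrite /splitR; case: (premisesR t) => t1 t2 /= [eq_t irr1 size1_gt0]; subst t.
have [ctx_t goal_t] := ctx_applyR t2 irr1 size1_gt0.
rewrite ctx_t size_cat in size_t; rewrite goal_t in fsize_t fr_t.
move/eqP: fr_t; rewrite -fsize_t fr_Prod_iota add0n => /andP[/eqP fr1 /eqP fr2].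
case: fsize_t => fsize_t; subst n k.
split; rewrite ?leq_addr //.
- rewrite /joinR /= renameK // => p.
  by rewrite fr2 mem_iota => /andP[le_p _]; apply: subnKC.
- by rewrite /countedR /countedL /good_seq fr1 irr1 !eqxx.
rewrite /countedL /good_seq; have [-> ->] := rename_spec (subn^~ (fsize (goal t1)).+1) t2.
rewrite size_map fsize_rename fr_rename fr2 map_subn_iota.
by rewrite !addKn !eqxx.
Qed.

Definition splitR_index n k (t : derivation) : 'I_n.+1 * 'I_k.+1 :=
  (inord (fsize (goal (splitR t).1)), inord (size (ctx (splitR t).1))).

Lemma HasCard_countedR_fibre n k (a : 'I_n.+1) (c : 'I_k.+1) m :
  HasCard {z : derivation * derivation | countedR a c z.1 && countedL (n - a) (k - c) z.2} m ->
  HasCard {t | countedR n.+1 k t && (splitR_index n k t == (a, c))} m.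
Proof.
have split_join z : countedR a c z.1 -> splitR (joinR z) = z.
  by case/andP=> _ irr1; apply: splitR_joinR irr1 (deriv_size_ctx (drv z.1)).
apply: (HasCard_bij_in (f := joinR) (g := splitR)).
- case=> t1 t2 /andP[/= R1 L2].
  have le_an : a <= n by rewrite -ltnS ltn_ord.
  have le_ck : c <= k by rewrite -ltnS ltn_ord.
  rewrite (countedR_joinR le_an le_ck R1 L2) /splitR_index split_join //.
  case/andP: R1 => /and3P[/eqP size1 /eqP fsize1 _] _.
  by rewrite /= size1 fsize1 !inord_val.
- move=> t /andP[/countedR_splitR + /eqP].
  rewrite /splitR_index; case: (splitR t) => t1 t2 /= [_ le_n le_k R1 L2] [a_eq c_eq].
  by rewrite -a_eq -c_eq !inordK ?ltnS // R1.
- by move=> z /andP[R1 _]; apply: split_join.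
- move=> t /andP[/countedR_splitR + _].
  by case: (splitR t) => t1 t2 [].
Qed.

Section Recurrences.

Variables l r : nat -> nat -> nat.
Hypothesis card_Lder : forall n k, HasCard (Lder n k) (l n k).
Hypothesis card_Rder : forall n k, HasCard (Rder n k) (r n k).

Let card_countedL n k : HasCard {t | countedL n k t} (l n k).
Proof. exact: HasCard_counted (card_Lder n k). Qed.

Let card_countedR n k : HasCard {t | countedR n k t} (r n k).
Proof. exact: HasCard_counted (card_Rder n k). Qed.

Lemma l_ctx0 n : l n 0 = 0.
Proof. by apply: HasCard0 (card_countedL n 0) _ => -[t]; rewrite countedL_ctx0. Qed.

Lemma r_ctx0 n : r n 0 = 0.
Proof. by apply: HasCard0 (card_countedR n 0) _ => -[t /andP[]]; rewrite countedL_ctx0. Qed.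

Lemma l_rec n k : 0 < k -> l n k = r n k + l n k.+1.
Proof.
move=> k_gt0; apply: HasCard_unique (card_countedL n k) _.
exact: HasCard_countedL_split k_gt0 (card_countedR n k) (card_countedL n k.+1).
Qed.

Lemma r_fsize0 k : r 0 k = (k == 1).
Proof.
have [->|k_neq1] := eqVneq k 1; last first.
  by apply: HasCard0 (card_countedR 0 k) _ => -[t /countedR_fsize0[/eqP]]; rewrite (negPf k_neq1).
pose t0 : {t | countedR 0 1 t} := exist _ (pack (d_id 0)) erefl.
apply: (HasCard1 (t := t0) (card_countedR 0 1)) => x.
by apply: val_inj; case: (countedR_fsize0 (valP x)).
Qed.

Lemma r_rec n k : r n.+1 k = \sum_(a < n.+1) \sum_(c < k.+1) r a c * l (n - a) (k - c).
Proof.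
apply: HasCard_unique (card_countedR n.+1 k) _; rewrite pair_big /=.
apply: (HasCard_fibres (f := splitR_index n k)) => -[a c].
exact: HasCard_countedR_fibre (HasCard_prod (card_countedR a c) (card_countedL _ _)).
Qed.

End Recurrences.

Local Open Scope ring_scope.
Import GRing.Theory.

Lemma ser_ext (F G : ser) : (forall n k, F n k = G n k) -> F = G.
Proof. by move=> eqFG; do 2![apply: functional_extensionality => ?]; apply: eqFG. Qed.

(* [sx] and [sz] are convertible to [smonomial 0 1] and [smonomial 1 0]. *)
Definition smonomial (i j : nat) : ser := fun n k => ((n == i) && (k == j))%:R.

Lemma smul_smonomial (i j : nat) (F : ser) n k :
  smul (smonomial i j) F n k = if (i <= n)%N && (j <= k)%N then F (n - i)%N (k - j)%N else 0.
Proof.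
rewrite /smul /smonomial.
under eq_bigr => a _ do under eq_bigr => c _ do rewrite -mulnb natrM -mulrA.
under eq_bigr => a _ do rewrite -big_distrr /=.
under eq_bigr => a _ do under eq_bigr => c _ do rewrite mulr_natl mulrb.
under eq_bigr => a _ do
  rewrite -big_mkcond (big_ord1_eq _ (fun c => F (n - a)%N (k - c)%N)) mulr_natl mulrb.
rewrite -big_mkcond (big_ord1_eq _ (fun a => if (j < k.+1)%N then F (n - a)%N (k - j)%N else 0)).
rewrite !ltnS.
by case: (i <= n)%N; case: (j <= k)%N.
Qed.

Theorem proposition3p2 (l r : nat -> nat -> nat) :
  (forall n k, HasCard (Lder n k) (l n k)) ->
  (forall n k, HasCard (Rder n k) (r n k)) ->
  let L := gf l in let R := gf r in
  (* L = x^{-1} (L - x L_1) + R, multiplied through by x *)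
  smul sx L = sadd (ssub L (smul sx (coef_x1 L))) (smul sx R) /\
  (* R = z R L + x *)
  R = sadd (smul sz (smul R L)) sx.
Proof.
move=> card_Lder card_Rder L R; split; apply: ser_ext => n k; rewrite /sadd.
- rewrite /ssub !(smul_smonomial 0 1) /L /R /gf /coef_x1 !subn0 !subn1.
  case: k => [|[|k]] /=.
  + by rewrite (l_ctx0 card_Lder) subr0 addr0.
  + by rewrite (l_ctx0 card_Lder) (r_ctx0 card_Rder) subrr addr0.
  + by rewrite (l_rec card_Lder card_Rder) // PoszD subr0 addrC.
- rewrite (smul_smonomial 1 0) /R /gf /sx; case: n => [|n] /=.
  + by rewrite (r_fsize0 card_Rder) add0r; case: (k == 1)%N.
  + rewrite (r_rec card_Lder card_Rder) addr0 subn1 subn0 /smul -natz natr_sum.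
    apply: eq_bigr => a _; rewrite natr_sum; apply: eq_bigr => c _.
    by rewrite natrM !natz.
Qed.
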